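(* Let $K$ be an idempotent, linearly ordered, archimedian, cancellative, commutative semiring. Let $u,q\in K$, $S=u(qX)^*$, let $r\geq1$, $u_1,\dots,u_r,q_1,\dots,q_r\in K$, $T_i=u_i(q_iX)^*$ and $T=\bigoplus_{1\leq i\leq r}T_i$. Then $T=S$ if and only if $T_i\leq S$ for all $1\leq i\leq r$ and $T_j=S$ for some $1\leq j\leq r$.
   Context: Semiring notions: idempotent ($u\oplus u=u$), linearly ordered ($u\leq v\iff u\oplus v=v$ is a total order), archimedian (for all $u,v,\lambda,\mu$: $u\lambda^k\geq v\mu^k$ for all $k\ge0$ implies $v=\mathbb{0}$ or $\lambda\geq\mu$), cancellative ($uv=u'v$ implies $v=\mathbb{0}$ or $u=u'$). For $a\in K$, $(aX)^*=\bigoplus_{k\ge0}a^kX^k\in K[[X]]$; series are added coefficientwise and ordered coefficientwise ($S\leq T$ iff $S\oplus T=T$). *)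

From HB Require Import structures.
From mathcomp Require Import all_boot all_order all_algebra.
Set Implicit Arguments. Unset Strict Implicit. Unset Printing Implicit Defensive.
Import GRing.Theory.
Local Open Scope ring_scope.

Section SemiringDefs.
Variable K : comPzSemiRingType.

Definition sr_le (u v : K) : Prop := u + v = v.

Definition sr_idempotent : Prop := forall u : K, u + u = u.

Definition sr_linearly_ordered : Prop :=
  [/\ (forall u : K, sr_le u u),
      (forall u v : K, sr_le u v -> sr_le v u -> u = v),
      (forall u v w : K, sr_le u v -> sr_le v w -> sr_le u w)
    & (forall u v : K, sr_le u v \/ sr_le v u)].

Definition sr_archimedean : Prop :=
  forall u v lam mu : K,
    (forall k : nat, sr_le (v * mu ^+ k) (u * lam ^+ k)) ->
    v = 0 \/ sr_le mu lam.

Definition sr_cancellative : Prop :=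
  forall u u' v : K, u * v = u' * v -> v = 0 \/ u = u'.

(* formal power series K[[X]] as coefficient sequences *)
Definition series := nat -> K.

Definition ser0 : series := fun _ => 0.
Definition ser_add (S T : series) : series := fun k => S k + T k.
Definition ser_le (S T : series) : Prop := forall k, S k + T k = T k.
(* u (qX)^* = sum_k u q^k X^k *)
Definition ser_ustar (u q : K) : series := fun k => u * q ^+ k.

End SemiringDefs.

(* Coefficientwise, [T = S] says that for every k the maximum (the sum, as
   addition is idempotent and the order linear) of the [u_i q_i^k] is [u q^k].
   Every [T_i] with [u_i <> 0] satisfies [q_i <= q] by the archimedean
   property.  If no [T_j] were equal to [S], a maximizing index at degree k
   with [q_i = q] would give [u_i = u] by cancellation, so every maximizing
   index has [q_i <> q]; then [u q^k <= u Q^k] for the sum [Q] of these [q_i],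
   whence [q <= Q] by the archimedean property, and [Q] is one of these
   [q_j <= q], a contradiction. *)
From HB Require Import structures.
From mathcomp Require Import all_boot all_order all_algebra.
From Stdlib Require Import FunctionalExtensionality.
Import GRing.Theory.
Local Open Scope ring_scope.

Section IdempotentSemiring.
Set Implicit Arguments. Unset Strict Implicit.
Variable K : comPzSemiRingType.
Implicit Types a b c d : K.

Lemma sr_le_trans a b c : sr_le a b -> sr_le b c -> sr_le a c.
Proof. by rewrite /sr_le => hab hbc; rewrite -hbc addrA hab. Qed.

Lemma sr_le_anti a b : sr_le a b -> sr_le b a -> a = b.
Proof. by rewrite /sr_le => hab hba; rewrite -hab -{1}hba addrC. Qed.

Lemma sr_le0 a : sr_le a 0 -> a = 0.
Proof. by rewrite /sr_le addr0. Qed.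

Lemma sr_leM a b c d : sr_le a b -> sr_le c d -> sr_le (a * c) (b * d).
Proof.
rewrite /sr_le => hab hcd; apply: (@sr_le_trans _ (b * c)).
  by rewrite /sr_le -mulrDl hab.
by rewrite /sr_le -mulrDr hcd.
Qed.

Lemma sr_le_sum (I : finType) (P : pred I) (F : I -> K) c :
  (forall i, P i -> sr_le (F i) c) -> sr_le (\sum_(i | P i) F i) c.
Proof.
move=> leFc; apply: (big_rec (fun x => sr_le x c)); first by rewrite /sr_le add0r.
by move=> i x Pi lexc; rewrite /sr_le -addrA lexc; apply: leFc.
Qed.

Hypothesis Hid : sr_idempotent K.

Lemma sr_le_refl a : sr_le a a.
Proof. exact: Hid. Qed.

Lemma sr_le_addr a b : sr_le a (a + b).
Proof. by rewrite /sr_le addrA Hid. Qed.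

Lemma sr_leX a b k : sr_le a b -> sr_le (a ^+ k) (b ^+ k).
Proof.
move=> leab; elim: k => [|k IHk]; first by rewrite !expr0; apply: sr_le_refl.
by rewrite !exprSr; apply: sr_leM.
Qed.

Lemma sr_le_sum_term (I : finType) (P : pred I) (F : I -> K) j :
  P j -> sr_le (F j) (\sum_(i | P i) F i).
Proof. by move=> Pj; rewrite (bigD1 j) //=; apply: sr_le_addr. Qed.

Hypothesis Hlin : sr_linearly_ordered K.

Lemma sr_addE a b : a + b = a \/ a + b = b.
Proof. by case: Hlin => _ _ _ /(_ a b) [|]; [right | rewrite addrC; left]. Qed.

Lemma sr_sum_eq_term (I : finType) (P : pred I) (F : I -> K) :
  \sum_(i | P i) F i = 0 \/ exists2 j, P j & \sum_(i | P i) F i = F j.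
Proof.
apply: (big_rec (fun x => x = 0 \/ exists2 j, P j & x = F j)); first by left.
move=> i x Pi [->|[j Pj ->]]; right; first by exists i; rewrite ?addr0.
by case: (sr_addE (F i) (F j)) => ->; [exists i | exists j].
Qed.

Hypothesis Hcan : sr_cancellative K.

Lemma sr_mulf_eq0 a b : a * b = 0 -> a = 0 \/ b = 0.
Proof.
move=> ab0; have : a * b = 0 * b by rewrite ab0 mul0r.
by case/Hcan=> ->; [right | left].
Qed.

Lemma sr_mulf_neq0 a b : a != 0 -> b != 0 -> a * b != 0.
Proof. by move=> /eqP a0 /eqP b0; apply/eqP => /sr_mulf_eq0 []. Qed.

Lemma sr_expf_neq0 a k : a != 0 -> a ^+ k != 0.
Proof.
move=> a0; elim: k => [|k IHk]; last by rewrite exprSr sr_mulf_neq0.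
by rewrite expr0; apply: contraNneq a0 => one0; rewrite -(mulr1 a) one0 mulr0.
Qed.

Hypothesis Harch : sr_archimedean K.

Section SumOfGeometric.
Variables (I : finType) (us qs : I -> K) (u q : K).
Hypothesis sum_geom : forall k, \sum_i us i * qs i ^+ k = u * q ^+ k.

Lemma geom_term_le i k : sr_le (us i * qs i ^+ k) (u * q ^+ k).
Proof. by rewrite -sum_geom; apply: (sr_le_sum_term (fun j => us j * qs j ^+ k)). Qed.

Lemma geom_ratio_le i : us i != 0 -> sr_le (qs i) q.
Proof.
by move=> /eqP ui0; case: (Harch (fun k => geom_term_le i k)).
Qed.

Lemma geom_coef_le i : sr_le (us i) u.
Proof. by have := geom_term_le i 0; rewrite !expr0 !mulr1. Qed.

Lemma geom_coef_sum : \sum_i us i = u.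
Proof.
by have := sum_geom 0; under eq_bigr do rewrite expr0 mulr1; rewrite expr0 mulr1.
Qed.

Let other i := (us i != 0) && (qs i != q).
Let Q := \sum_(i | other i) qs i.

Lemma geom_le_other_ratio :
  u != 0 -> q != 0 -> ~~ [exists j, (us j == u) && (qs j == q)] ->
  forall k, sr_le (u * q ^+ k) (u * Q ^+ k).
Proof.
move=> u0 q0 noS k; have uqk0 := sr_mulf_neq0 u0 (sr_expf_neq0 k q0).
have /= := sr_sum_eq_term predT (fun i => us i * qs i ^+ k).
rewrite sum_geom => -[uqk_eq0 | [i _ sumi]]; first by rewrite uqk_eq0 eqxx in uqk0.
rewrite sumi.
have ui0 : us i != 0 by apply: contraNneq uqk0 => ui0; rewrite sumi ui0 mul0r.
have qiq : qs i != q.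
  apply: contraNneq noS => qi; apply/existsP; exists i; rewrite qi eqxx andbT.
  move: sumi; rewrite qi => /esym/Hcan[qk0 | /eqP //].
  by rewrite qk0 mulr0 eqxx in uqk0.
apply: sr_leM (geom_coef_le i) (sr_leX _ _).
by apply: (sr_le_sum_term qs); rewrite /other ui0 qiq.
Qed.

Lemma geom_has_equal_term : u != 0 -> exists j, us j = u /\ qs j = q.
Proof.
move=> u0; have [q0 | q0] := eqVneq q 0.
  (* [u q^k] vanishes for [k > 0], so any index attaining [u] in degree 0 works. *)
  have /= := sr_sum_eq_term predT us; rewrite geom_coef_sum.
  case=> [u_eq0 | [j _ /esym uj_u]]; first by rewrite u_eq0 eqxx in u0.
  exists j; split=> //; rewrite q0; have := geom_term_le j 1.
  rewrite !expr1 q0 mulr0 uj_u => /sr_le0 /sr_mulf_eq0 [u_eq0|] //.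
  by rewrite u_eq0 eqxx in u0.
case: (boolP [exists j, (us j == u) && (qs j == q)]) => [|noS].
  by case/existsP=> j /andP[/eqP uj /eqP qj]; exists j.
have [/eqP|le_qQ] := Harch (geom_le_other_ratio u0 q0 noS); first by rewrite (negPf u0).
have [Q0 | [j /andP[uj0 qjq] Qj]] := sr_sum_eq_term other qs.
  by move: le_qQ; rewrite /Q Q0 => /sr_le0 /eqP; rewrite (negPf q0).
have qj_q : qs j = q by apply: sr_le_anti; [exact: geom_ratio_le | rewrite -Qj].
by rewrite qj_q eqxx in qjq.
Qed.

End SumOfGeometric.
End IdempotentSemiring.

Lemma ser_sumE (K : comPzSemiRingType) (I : finType) (T : I -> series K) k :
  (\big[@ser_add K/ser0 K]_(i : I) T i) k = \sum_(i : I) T i k.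
Proof. exact: (big_morph (fun S : series K => S k) (id1 := 0) (op1 := +%R)). Qed.

Theorem lemma7 (K : comPzSemiRingType)
  (Hid : sr_idempotent K) (Hlin : sr_linearly_ordered K)
  (Harch : sr_archimedean K) (Hcan : sr_cancellative K)
  (u q : K) (r : nat) (Hr : (1 <= r)%N) (us qs : 'I_r -> K) :
  let S := ser_ustar u q in
  let T := fun i : 'I_r => ser_ustar (us i) (qs i) in
  (\big[@ser_add K/ser0 K]_(i < r) T i = S) <->
  ((forall i : 'I_r, ser_le (T i) S) /\ (exists j : 'I_r, T j = S)).
Proof.
move=> S T; split=> [sumTS | [leTS [j TjS]]].
  have sum_geom k : \sum_i us i * qs i ^+ k = u * q ^+ k.
    by rewrite -[RHS](congr1 (fun S => S k) sumTS) ser_sumE.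
  split=> [i k | ]; first exact: geom_term_le.
  have [u0 | u0] := eqVneq u 0.
    exists (Ordinal Hr); apply: functional_extensionality => k.
    rewrite /S /ser_ustar u0 mul0r; apply: sr_le0.
    by have := geom_term_le Hid sum_geom (Ordinal Hr) k; rewrite u0 mul0r.
  have [j [uj qj]] := geom_has_equal_term Hid Hlin Hcan Harch sum_geom u0.
  by exists j; rewrite /T uj qj.
apply: functional_extensionality => k.
rewrite ser_sumE (bigD1 j) //= TjS addrC.
by apply: sr_le_sum => i _; apply: leTS.
Qed.
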